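(* With the notation below, the map $$\mathcal N^r_{x_0}\longrightarrow N_0\times N_2\times\cdots\times N_r,\qquad j^r_{x_0}g\longmapsto (g_{x_0},g^2_{x_0},\dots,g^r_{x_0})$$ is a diffeomorphism (for $r\le 1$ the target is just $N_0$).
   Context: $X$ is a smooth $n$-manifold, $x_0\in X$, $p+q=n$, $(z_1,\dots,z_n)$ a fixed coordinate system centred at $x_0$, $r\ge0$. $\mathcal N^r_{x_0}$ is the submanifold of the manifold $J^r_{x_0}M$ of $r$-jets at $x_0$ of semi-Riemannian metrics of signature $(p,q)$ consisting of those jets whose coefficients $g_{ij}$ in the coordinates $z$ satisfy the Gauss-lemma equations $\sum_j g_{ij}z_j=\sum_j g_{ij}(x_0)z_j$ up to order $r$. For $k\ge1$, $N_k$ is the vector space of $(k+2)$-covariant tensors $T$ on $T_{x_0}X$ that are symmetric in the first two indices and in the last $k$ indices, and whose cyclic sum over the last $k+1$ indices vanishes: $T_{ijk_1\dots k_k}+T_{ik_kjk_1\dots k_{k-1}}+\cdots+T_{ik_1\dots k_kj}=0$; $N_0$ is the open set of symmetric bilinear forms of signature $(p,q)$ on $T_{x_0}X$. For $j^r_{x_0}g\in\mathcal N^r_{x_0}$ and $2\le s\le r$, $g^s_{x_0}$ is the tensor $\sum \frac{\partial^s g_{ij}}{\partial z_{k_1}\cdots\partial z_{k_s}}(x_0)\,dz_i\otimes dz_j\otimes dz_{k_1}\otimes\cdots\otimes dz_{k_s}$ (the $s$-th normal tensor of $g$ at $x_0$), and $g_{x_0}$ is the value of the metric at $x_0$. *)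

From Stdlib Require Import Reals Factorial.
From mathcomp Require Import all_boot.
Set Implicit Arguments.
Unset Strict Implicit.
Unset Printing Implicit Defensive.
Local Open Scope R_scope.

Definition near_box {I : Type} (x y : I -> R) (d : R) : Prop :=
  forall i, (Rabs (y i - x i) < d) : Prop.

Definition is_open {I : Type} (U : (I -> R) -> Prop) : Prop :=
  forall x, U x -> exists d, (0 < d) /\ forall y, near_box x y d -> U y.

Definition cont_on {I : Type} (U : (I -> R) -> Prop) (h : (I -> R) -> R) : Prop :=
  forall x, U x -> forall e, (0 < e) ->
    exists d, (0 < d) /\ forall y, near_box x y d -> (Rabs (h y - h x) < e).

Definition shift {I : eqType} (x : I -> R) (i : I) (t : R) : I -> R :=
  fun j => if j == i then (x j + t) else x j.

Fixpoint Ck {I : eqType} (k : nat) (U : (I -> R) -> Prop) (h : (I -> R) -> R) : Prop :=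
  match k with
  | 0 => cont_on U h
  | k'.+1 => cont_on U h /\
      exists D : I -> (I -> R) -> R,
        (forall i x, U x -> derivable_pt_lim (fun t => h (shift x i t)) 0 (D i x)) /\
        (forall i, Ck k' U (D i))
  end.

Definition smooth_fun {I : eqType} (U : (I -> R) -> Prop) (h : (I -> R) -> R) : Prop :=
  forall k, Ck k U h.

Definition smooth_on {I J : eqType} (A : (I -> R) -> Prop) (f : (I -> R) -> (J -> R)) : Prop :=
  forall x, A x -> exists (U : (I -> R) -> Prop) (F : (I -> R) -> (J -> R)),
    is_open U /\ U x /\ (forall j, smooth_fun U (fun v => F v j)) /\
    (forall y, A y -> U y -> f y = F y).

Definition diffeomorphism {I J : eqType} (A : (I -> R) -> Prop) (B : (J -> R) -> Prop)
    (f : (I -> R) -> (J -> R)) : Prop :=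
  (forall x, A x -> B (f x)) /\ smooth_on A f /\
  exists g : (J -> R) -> (I -> R),
    (forall y, B y -> A (g y)) /\ smooth_on B g /\
    (forall x, A x -> g (f x) = x) /\ (forall y, B y -> f (g y) = y).

(* Tensors on T_{x0}X = R^n in the coordinates z: T i j [k1;...;ks]   *)
(* is the component T_{i j k1 ... ks}.                                *)

Definition tensor (n : nat) := 'I_n -> 'I_n -> seq 'I_n -> R.

Definition sym12 n (T : tensor n) (s : nat) : Prop :=
  forall i j (k : seq 'I_n), size k = s -> T i j k = T j i k.

Definition symlast n (T : tensor n) (s : nat) : Prop :=
  forall i j (k k' : seq 'I_n), size k = s -> perm_eq k k' -> T i j k = T i j k'.

(* cyclic sum over the last s+1 indices (j,k1,...,ks) vanishes *)
Definition cyclic_sum_zero n (T : tensor n) (s : nat) : Prop :=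
  forall i j (k : seq 'I_n), size k = s ->
    \big[Rplus/0]_(m < s.+1) T i (head j (rot m (j :: k))) (behead (rot m (j :: k))) = 0.

(* N_k, k >= 1 (as a condition on the order-k block of T) *)
Definition in_Nk n (T : tensor n) (k : nat) : Prop :=
  sym12 T k /\ symlast T k /\ cyclic_sum_zero T k.

(* signature (p,q): Sylvester normal form diag(1,...,1,-1,...,-1) *)
Definition signature_pq n (p q : nat) (G : 'I_n -> 'I_n -> R) : Prop :=
  exists P : 'I_n -> 'I_n -> R, forall a b : 'I_n,
    \big[Rplus/0]_(c < n) \big[Rplus/0]_(d < n) (P c a * G c d * P d b)
      = (if a == b then (if (a < p)%N then 1 else -1) else 0).

Definition in_N0 n (p q : nat) (G : 'I_n -> 'I_n -> R) : Prop :=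
  (forall i j, G i j = G j i) /\ signature_pq p q G.

(* r-jets at x0 of metrics, in the coordinates z.  A jet is the family  *)
(* of Taylor coefficients  d^s g_ij / dz_k1...dz_ks (x0), s <= r,      *)
(* indexed by (i, j, [k1;...;ks]).                                     *)

Notation word n r := {k : seq 'I_n | (size k <= r)%N}.
Notation JIdx n r := ('I_n * 'I_n * word n r)%type.

Definition jcoef n r (x : JIdx n r -> R) : tensor n :=
  fun i j k => match (insub k : option (word n r)) with
               | Some w => x (i, j, w) | None => 0 end.

Definition jet_space n p q r (x : JIdx n r -> R) : Prop :=
  (forall s, (s <= r)%N -> sym12 (jcoef x) s /\ symlast (jcoef x) s) /\
  in_N0 p q (fun i j => jcoef x i j [::]).

Definition taylor n r (x : JIdx n r -> R) (i j : 'I_n) (z : 'I_n -> R) : R :=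
  \big[Rplus/0]_(s < r.+1)
    (/ INR (fact s) *
     \big[Rplus/0]_(k : s.-tuple 'I_n) (jcoef x i j k * \big[Rmult/1]_(l <- k) z l)).

(* Gauss-lemma equations  sum_j g_ij z_j = sum_j g_ij(x0) z_j  up to order r *)
Definition gauss n r (x : JIdx n r -> R) : Prop :=
  forall (i : 'I_n) (z : 'I_n -> R),
    \big[Rplus/0]_(j < n) (taylor x i j z * z j)
    = \big[Rplus/0]_(j < n) (jcoef x i j [::] * z j).

Definition normal_jets n p q r (x : JIdx n r -> R) : Prop :=
  jet_space p q x /\ gauss x.

(* Target N_0 x N_2 x ... x N_r : blocks of orders 0, 2, ..., r.      *)

Notation tword n r := {k : seq 'I_n | (size k <= r)%N && (size k != 1%N)}.
Notation TIdx n r := ('I_n * 'I_n * tword n r)%type.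

Definition tcoef n r (y : TIdx n r -> R) : tensor n :=
  fun i j k => match (insub k : option (tword n r)) with
               | Some w => y (i, j, w) | None => 0 end.

Definition normal_target n p q r (y : TIdx n r -> R) : Prop :=
  in_N0 p q (fun i j => tcoef y i j [::]) /\
  (forall s, (2 <= s <= r)%N -> in_Nk (tcoef y) s).

Definition jet_to_normal n r (x : JIdx n r -> R) : TIdx n r -> R :=
  fun t => jcoef x t.1.1 t.1.2 (val t.2).

(* A jet x of order r is identified with its Taylor coefficients, and the
   map to N_0 x N_2 x ... x N_r merely forgets the (order 1) coefficients.
   The proof shows that on jets satisfying the Gauss-lemma equations the
   order 1 coefficients vanish, and that the Gauss equations are equivalent
   to the cyclic-sum conditions defining the N_s.  Hence the inverse map
   re-inserts zeros at order 1; both maps are coordinate projections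
   (or constants) and therefore smooth. *)

From HB Require Import structures.
From Stdlib Require Import Reals Lra FunctionalExtensionality Factorial.
From mathcomp Require Import all_boot.
Set Implicit Arguments. Unset Strict Implicit. Unset Printing Implicit Defensive.
Local Open Scope R_scope.

Lemma RplusA : associative Rplus. Proof. by move=> *; rewrite Rplus_assoc. Qed.
Lemma RmultA : associative Rmult. Proof. by move=> *; rewrite Rmult_assoc. Qed.
HB.instance Definition _ := Monoid.isComLaw.Build R 0 Rplus RplusA Rplus_comm Rplus_0_l.
HB.instance Definition _ := Monoid.isComLaw.Build R 1 Rmult RmultA Rmult_comm Rmult_1_l.
HB.instance Definition _ := Monoid.isMulLaw.Build R 0 Rmult Rmult_0_l Rmult_0_r.
HB.instance Definition _ :=
  Monoid.isAddLaw.Build R Rmult Rplus Rmult_plus_distr_r Rmult_plus_distr_l.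

(** * Smoothness of coordinate maps *)

Lemma derivable_pt_lim_shift (I : eqType) (z : I -> R) a b :
  derivable_pt_lim (fun t => shift z a t b) 0 (if b == a then 1 else 0).
Proof.
rewrite /shift; case: (b == a); last exact: derivable_pt_lim_const.
rewrite -[1]Rplus_0_l.
apply: (derivable_pt_lim_plus (fun _ => z b) id);
  [exact: derivable_pt_lim_const | exact: derivable_pt_lim_id].
Qed.

Lemma shift0 (I : eqType) (z : I -> R) a : shift z a 0 = z.
Proof.
by apply: functional_extensionality => j; rewrite /shift; case: (j == a); rewrite ?Rplus_0_r.
Qed.

Lemma cont_on_const (I : Type) (U : (I -> R) -> Prop) c : cont_on U (fun _ => c).
Proof. by move=> x _ e he; exists 1; split; [lra | move=> y _; rewrite Rminus_diag Rabs_R0]. Qed.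

Lemma Ck_const (I : eqType) k (U : (I -> R) -> Prop) c : Ck k U (fun _ => c).
Proof.
elim: k c => [|k IH] c /=; first exact: cont_on_const.
split; first exact: cont_on_const.
exists (fun _ _ => 0); split => [i x _|i]; [exact: derivable_pt_lim_const | exact: IH].
Qed.

Lemma Ck_proj (I : eqType) k (U : (I -> R) -> Prop) a : Ck k U (fun v => v a).
Proof.
have cont : cont_on U (fun v => v a) by move=> x _ e he; exists e; split => // y; exact.
case: k => [|k] //=; split => //.
exists (fun i _ => if a == i then 1 else 0); split => [i x _|i]; last exact: Ck_const.
exact: derivable_pt_lim_shift.
Qed.

Lemma smooth_on_coordinate_map (I J : eqType) (A : (I -> R) -> Prop)
    (f : (I -> R) -> J -> R) :
  (forall j, (exists a, forall v, f v j = v a) \/ (exists c, forall v, f v j = c)) ->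
  smooth_on A f.
Proof.
move=> Hf x _; exists (fun _ => True), f; do !split => //.
  by move=> y _; exists 1; split; [lra | by []].
move=> j k; case: (Hf j) => [[a Ha] | [c Hc]].
  by rewrite (functional_extensionality _ _ Ha); exact: Ck_proj.
by rewrite (functional_extensionality _ _ Hc); exact: Ck_const.
Qed.

(** * Vanishing polynomials have vanishing coefficients *)

Lemma derivable_pt_lim_big (I : Type) (s : seq I) (P : pred I) (f : I -> R -> R)
    (df : I -> R) x0 :
  (forall i, derivable_pt_lim (f i) x0 (df i)) ->
  derivable_pt_lim (fun t => \big[Rplus/0]_(i <- s | P i) f i t) x0
                   (\big[Rplus/0]_(i <- s | P i) df i).
Proof.
move=> Hf; elim: s => [|a s IH].
  rewrite big_nil; apply: (derivable_pt_lim_ext (fun _ => 0)) => [t|].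
    by rewrite big_nil.
  exact: derivable_pt_lim_const.
rewrite big_cons; case: ifP => Pa.
  apply: (derivable_pt_lim_ext (fun t => f a t + \big[Rplus/0]_(i <- s | P i) f i t)).
    by move=> t; rewrite big_cons Pa.
  exact: derivable_pt_lim_plus.
by apply: (derivable_pt_lim_ext _ _ _ _ _ IH) => t; rewrite big_cons Pa.
Qed.

Lemma derivable_pt_lim_eq0 (f : R -> R) x l :
  (forall t, f t = 0) -> derivable_pt_lim f x l -> l = 0.
Proof.
move=> Hf Hd; rewrite (functional_extensionality _ _ Hf) in Hd.
apply: (uniqueness_limite _ _ _ _ Hd); exact: derivable_pt_lim_const.
Qed.

Lemma INR_S_neq0 d : INR d.+1 <> 0.
Proof. exact: not_0_INR. Qed.

(* A univariate polynomial function vanishing everywhere has zero coefficients: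
   its constant term is its value at 0, and its derivative vanishes too. *)
Lemma univariate_poly_eq0 (N : nat) (c : nat -> R) :
  (forall t, \big[Rplus/0]_(s < N) (c s * t ^ s) = 0) ->
  forall s, (s < N)%N -> c s = 0.
Proof.
elim: N c => [|N IH] c Hc s Hs //.
case: s Hs => [_|s Hs].
  have := Hc 0; rewrite big_ord_recl /= big1 => [|i _]; last by rewrite /= Rmult_0_l Rmult_0_r.
  by rewrite Rmult_1_r Rplus_0_r.
have Hderiv t : \big[Rplus/0]_(s < N) ((c s.+1 * INR s.+1) * t ^ s) = 0.
  have D := @derivable_pt_lim_big _ (index_enum 'I_N.+1) xpredT (fun s t => c s * t ^ s)
     (fun s => c s * (INR s * t ^ Nat.pred s)) t.
  have {}D : derivable_pt_lim (fun t => \big[Rplus/0]_(s < N.+1) (c s * t ^ s)) t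
      (\big[Rplus/0]_(s < N.+1) (c s * (INR s * t ^ Nat.pred s))).
    by apply: D => i; apply: derivable_pt_lim_scal; exact: derivable_pt_lim_pow.
  have := derivable_pt_lim_eq0 Hc D.
  rewrite big_ord_recl [X in X + _]/= Rmult_0_l Rmult_0_r Rplus_0_l => E.
  apply: eq_trans E; apply: eq_bigr => i _.
  by rewrite (_ : lift ord0 i = i.+1 :> nat) //=; ring.
have := IH (fun s => c s.+1 * INR s.+1) Hderiv s Hs; move/Rmult_integral => [// | E].
by case: (INR_S_neq0 E).
Qed.

(** Homogeneous polynomials of degree d in n variables, with coefficients
    C w indexed by words w of length d, written in Horner form so that
    differentiation can proceed by induction on d. *)
Fixpoint hpoly n d (C : seq 'I_n -> R) (z : 'I_n -> R) : R :=
  match d with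
  | 0 => C [::]
  | d'.+1 => \big[Rplus/0]_(a < n) (z a * hpoly d' (fun w => C (a :: w)) z)
  end.

Lemma big_tuple_cons n d (F : d.+1.-tuple 'I_n -> R) :
  \big[Rplus/0]_(k : d.+1.-tuple 'I_n) F k =
  \big[Rplus/0]_(a < n) \big[Rplus/0]_(k : d.-tuple 'I_n) F [tuple of a :: k].
Proof.
rewrite pair_big /=.
rewrite (reindex (fun p : 'I_n * d.-tuple 'I_n => [tuple of p.1 :: p.2])) //=.
exists (fun k : d.+1.-tuple 'I_n => (thead k, [tuple of behead k])) => [[a k] _|k _] /=.
  by congr pair; apply: val_inj.
by case/tupleP: k => a k; apply: val_inj.
Qed.

Lemma big_tuple0 n (F : 0.-tuple 'I_n -> R) :
  \big[Rplus/0]_(k : 0.-tuple 'I_n) F k = F [tuple].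
Proof. apply: big_pred1 => k /=; symmetry; apply/eqP; exact: tuple0. Qed.

Lemma hpoly_tuple n d (C : seq 'I_n -> R) z :
  hpoly d C z = \big[Rplus/0]_(k : d.-tuple 'I_n) (C k * \big[Rmult/1]_(l <- k) z l).
Proof.
elim: d C => [|d IH] C /=; first by rewrite big_tuple0 /= big_nil Rmult_1_r.
rewrite big_tuple_cons; apply: eq_bigr => a _.
rewrite IH big_distrr; apply: eq_bigr => k _ /=.
by rewrite big_cons; ring.
Qed.

Lemma hpoly_ext n d (C C' : seq 'I_n -> R) z :
  (forall w, size w = d -> C w = C' w) -> hpoly d C z = hpoly d C' z.
Proof.
move=> H; rewrite !hpoly_tuple; apply: eq_bigr => k _; rewrite H //; exact: size_tuple.
Qed.

Lemma hpoly_sum n d M (G : nat -> seq 'I_n -> R) z :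
  hpoly d (fun w => \big[Rplus/0]_(m < M) G m w) z = \big[Rplus/0]_(m < M) hpoly d (G m) z.
Proof.
rewrite hpoly_tuple; under eq_bigr do rewrite big_distrl.
by rewrite exchange_big; apply: eq_bigr => m _; rewrite hpoly_tuple.
Qed.

Lemma hpoly_rot n d m (F : seq 'I_n -> R) z :
  hpoly d (fun w => F (rot m w)) z = hpoly d F z.
Proof.
rewrite !hpoly_tuple.
rewrite [RHS](reindex (fun k : d.-tuple 'I_n => [tuple of rot m k])) /=.
  apply: eq_bigr => k _; congr Rmult.
  by apply: perm_big; rewrite perm_sym perm_rot.
exists (fun k : d.-tuple 'I_n => [tuple of rotr m k]) => k _; apply: val_inj => /=.
  exact: rotK.
exact: rotrK.
Qed.

Definition perm_invariant n (C : seq 'I_n -> R) : Prop :=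
  forall w w', perm_eq w w' -> C w = C w'.

Lemma big_delta n (F : 'I_n -> R) a :
  \big[Rplus/0]_(b < n) ((if b == a then 1 else 0) * F b) = F a.
Proof. by rewrite (bigD1 a) //= eqxx big1 => [|b /negbTE ->]; ring. Qed.

Lemma hpoly_deriv n d (C : seq 'I_n -> R) z a : perm_invariant C ->
  derivable_pt_lim (fun t => hpoly d.+1 C (shift z a t)) 0
     (INR d.+1 * hpoly d (fun w => C (a :: w)) z).
Proof.
elim: d C => [|d IH] C HC.
  have H := @derivable_pt_lim_big _ (index_enum 'I_n) xpredT
     (fun b t => shift z a t b * C [:: b]) (fun b => (if b == a then 1 else 0) * C [:: b]) 0.
  rewrite big_delta in H; rewrite /= Rmult_1_l; apply: H => b.
  rewrite -[X in derivable_pt_lim _ _ X]Rplus_0_r.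
  rewrite -[X in _ + X](Rmult_0_r (shift z a 0 b)).
  apply: (derivable_pt_lim_mult (fun t => shift z a t b) (fun _ => C [:: b])).
    exact: derivable_pt_lim_shift.
  exact: derivable_pt_lim_const.
have HCb b : perm_invariant (fun w => C (b :: w)).
  by move=> w w' Hw; apply: HC; rewrite perm_cons.
have swap b : (fun w => C (b :: a :: w)) = (fun w => C (a :: b :: w)).
  apply: functional_extensionality => w; apply: HC.
  rewrite -[b :: a :: w]/([:: b; a] ++ w) -[a :: b :: w]/([:: a; b] ++ w)
             perm_cat2r.
  by apply/permP => P /=; rewrite !addn0 addnC.
have Leibniz : \big[Rplus/0]_(b < n) ((if b == a then 1 else 0) * hpoly d.+1 (fun w => C (b :: w)) z +
      z b * (INR d.+1 * hpoly d (fun w => C (b :: a :: w)) z)) =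
      INR d.+2 * hpoly d.+1 (fun w => C (a :: w)) z.
  rewrite [INR d.+2]S_INR big_split /= big_delta Rmult_plus_distr_r Rmult_1_l Rplus_comm.
  congr Rplus; rewrite big_distrr; apply: eq_bigr => b _.
  by rewrite swap /=; ring.
rewrite -Leibniz; apply: derivable_pt_lim_big => b.
have := derivable_pt_lim_mult _ _ 0 _ _ (derivable_pt_lim_shift z a b) (IH _ (HCb b)).
by rewrite shift0.
Qed.

Lemma hpoly_eq0_coef n d (C : seq 'I_n -> R) : perm_invariant C ->
  (forall z, hpoly d C z = 0) -> forall w, size w = d -> C w = 0.
Proof.
elim: d C => [|d IH] C HC H w Hw.
  by case: w Hw => // _; exact: (H (fun _ => 0)).
case: w Hw => // a w [Hw].
apply: (IH (fun w => C (a :: w))) => // [w1 w2 Hp | z].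
  by apply: HC; rewrite perm_cons.
have := derivable_pt_lim_eq0 (fun t => H (shift z a t)) (hpoly_deriv d z a HC).
by move/Rmult_integral => [E | //]; case: (INR_S_neq0 E).
Qed.

(** * The Gauss equations order by order *)

(* The order-s part of the Gauss equation with free index i:
   sum_j sum_{|k| = s} T_{i j k} z^k z_j. *)
Definition gauss_form n (T : tensor n) i s (z : 'I_n -> R) : R :=
  \big[Rplus/0]_(j < n)
    (\big[Rplus/0]_(k : s.-tuple 'I_n) (T i j k * \big[Rmult/1]_(l <- k) z l) * z j).

(* The coefficients T_{i w_0 (w_1 ... w_s)} of [gauss_form] as a
   polynomial of degree s+1. *)
Definition head_coef n (T : tensor n) i (w : seq 'I_n) : R :=
  if w is a :: w' then T i a w' else 0.

(* The symmetrised coefficient sum_{a in w} T_{i a (w \ a)} on words of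
   length s+1: the cyclic sum of the definition of N_s. *)
Definition cyclic_coef n (T : tensor n) i s (w : seq 'I_n) : R :=
  if size w == s.+1 then \big[Rplus/0]_(a <- w) T i a (rem a w) else 0.

Lemma gauss_form_hpoly n (T : tensor n) i s z :
  gauss_form T i s z = hpoly s.+1 (head_coef T i) z.
Proof. by rewrite /gauss_form /=; apply: eq_bigr => j _; rewrite Rmult_comm hpoly_tuple. Qed.

Lemma rot_nth (T : eqType) (x0 : T) (w : seq T) m : (m < size w)%N ->
  rot m w = nth x0 w m :: (drop m.+1 w ++ take m w) /\
  perm_eq (drop m.+1 w ++ take m w) (rem (nth x0 w m) w).
Proof.
move=> Hm; have E : rot m w = nth x0 w m :: (drop m.+1 w ++ take m w).
  by rewrite /rot (drop_nth x0 Hm).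
split => //; rewrite -(perm_cons (nth x0 w m)) -E.
by rewrite perm_rot; apply: perm_to_rem; exact: mem_nth.
Qed.

Lemma perm_rem (T : eqType) (a : T) (w w' : seq T) : perm_eq w w' -> a \in w ->
  perm_eq (rem a w) (rem a w').
Proof.
move=> P aw; have aw' : a \in w' by rewrite -(perm_mem P).
rewrite -(perm_cons a); apply: perm_trans (perm_to_rem aw').
by apply: perm_trans P; rewrite perm_sym perm_to_rem.
Qed.

Lemma sum_rot_head_coef n (T : tensor n) i s w : symlast T s -> size w = s.+1 ->
  \big[Rplus/0]_(m < s.+1) head_coef T i (rot m w) = cyclic_coef T i s w.
Proof.
move=> HS Hw; rewrite /cyclic_coef Hw eqxx.
case: w Hw => [//|x0 w'] Hw.
rewrite (big_nth x0) big_mkord -Hw; apply: eq_bigr => m _.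
have [-> P] := rot_nth x0 (ltn_ord m); apply: HS => //.
by rewrite (perm_size P) size_rem ?Hw //; exact: mem_nth.
Qed.

Lemma cyclic_coef_perm_invariant n (T : tensor n) i s :
  symlast T s -> perm_invariant (cyclic_coef T i s).
Proof.
move=> HS w w' P; rewrite /cyclic_coef (perm_size P).
case: eqP => // Hs; rewrite (perm_big _ P) /=; apply: eq_big_seq => a aw'.
have aw : a \in w by rewrite (perm_mem P).
apply: HS; last exact: perm_rem.
by rewrite size_rem // (perm_size P) Hs.
Qed.

Lemma sum_constR N c : \big[Rplus/0]_(m < N) c = INR N * c.
Proof.
elim: N => [|N IH]; first by rewrite big_ord0 /=; ring.
by rewrite big_ord_recr IH S_INR /=; ring.
Qed.

Lemma hpoly_cyclic_coef n (T : tensor n) i s z : symlast T s ->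
  hpoly s.+1 (cyclic_coef T i s) z = INR s.+1 * gauss_form T i s z.
Proof.
move=> HS.
rewrite -(@hpoly_ext _ _ (fun w => \big[Rplus/0]_(m < s.+1) head_coef T i (rot m w)));
  last by move=> w Hw; rewrite sum_rot_head_coef.
rewrite (hpoly_sum s.+1 s.+1 (fun m w => head_coef T i (rot m w))).
under eq_bigr do rewrite hpoly_rot.
by rewrite sum_constR gauss_form_hpoly.
Qed.

Lemma gauss_form_eq0_iff n (T : tensor n) i s : symlast T s ->
  (forall z, gauss_form T i s z = 0) <->
  (forall w, size w = s.+1 -> cyclic_coef T i s w = 0).
Proof.
move=> HS; split => H.
  apply: hpoly_eq0_coef; first exact: cyclic_coef_perm_invariant.
  by move=> z; rewrite hpoly_cyclic_coef // H Rmult_0_r.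
move=> z; have := hpoly_cyclic_coef i z HS.
rewrite (@hpoly_ext _ _ _ (fun _ => 0)) // hpoly_tuple big1 => [|k _]; last by ring.
by move=> /esym /Rmult_integral [E | //]; case: (INR_S_neq0 E).
Qed.

Lemma cyclic_sum_zero_iff n (T : tensor n) s : symlast T s ->
  cyclic_sum_zero T s <-> (forall i w, size w = s.+1 -> cyclic_coef T i s w = 0).
Proof.
move=> HS.
have E i j k : size k = s ->
   \big[Rplus/0]_(m < s.+1) T i (head j (rot m (j :: k))) (behead (rot m (j :: k)))
   = cyclic_coef T i s (j :: k).
  move=> Hk; rewrite -sum_rot_head_coef //=; last by rewrite Hk.
  apply: eq_bigr => m _; have : rot m (j :: k) <> [::].
    by move/(f_equal size); rewrite size_rot.
  by case: (rot m (j :: k)).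
split => H.
  by move=> i [//|j k] [Hk]; rewrite -E //; exact: H.
by move=> i j k Hk; rewrite E //; apply: H => /=; rewrite Hk.
Qed.

Lemma gauss_expand n r (x : JIdx n r -> R) i z :
  \big[Rplus/0]_(j < n) (taylor x i j z * z j) =
  \big[Rplus/0]_(s < r.+1) (/ INR (fact s) * gauss_form (jcoef x) i s z).
Proof.
rewrite /taylor; under eq_bigr do rewrite big_distrl.
rewrite exchange_big; apply: eq_bigr => s _.
by rewrite /gauss_form big_distrr; apply: eq_bigr => j _ /=; ring.
Qed.

Lemma prod_scale n (k : seq 'I_n) t z :
  \big[Rmult/1]_(l <- k) (t * z l) = t ^ size k * \big[Rmult/1]_(l <- k) z l.
Proof.
elim: k => [|a k IH]; first by rewrite !big_nil /=; ring.
by rewrite !big_cons IH /=; ring.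
Qed.

Lemma gauss_form_scale n (T : tensor n) i s z t :
  gauss_form T i s (fun l => t * z l) = t ^ s.+1 * gauss_form T i s z.
Proof.
rewrite /gauss_form big_distrr; apply: eq_bigr => j _.
have -> : \big[Rplus/0]_(k : s.-tuple 'I_n) (T i j k * \big[Rmult/1]_(l <- k) (t * z l))
   = t ^ s * \big[Rplus/0]_(k : s.-tuple 'I_n) (T i j k * \big[Rmult/1]_(l <- k) z l).
  by rewrite big_distrr; apply: eq_bigr => k _; rewrite prod_scale size_tuple /=; ring.
by rewrite /=; ring.
Qed.

Lemma gauss_form0 n (T : tensor n) i z :
  gauss_form T i 0 z = \big[Rplus/0]_(j < n) (T i j [::] * z j).
Proof. by apply: eq_bigr => j _; rewrite big_tuple0 /= big_nil Rmult_1_r. Qed.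

(* Since the Gauss equations hold along every ray t z, they split into their
   homogeneous parts; the order 0 part is an identity. *)
Lemma gauss_iff_forms n r (x : JIdx n r -> R) :
  gauss x <-> (forall s, (1 <= s <= r)%N -> forall i z, gauss_form (jcoef x) i s z = 0).
Proof.
split => [Hg s /andP [s1 sr] i z | H i z]; last first.
  rewrite gauss_expand big_ord_recl big1 => [|s _]; last by rewrite H ?Rmult_0_r // lift0 ltn_ord.
  by rewrite gauss_form0 /= Rinv_1 Rmult_1_l Rplus_0_r.
pose c k := if k is s'.+2 then / INR (fact s'.+1) * gauss_form (jcoef x) i s'.+1 z else 0.
have Hc t : \big[Rplus/0]_(k < r.+2) (c k * t ^ k) = 0.
  have E := Hg i (fun l => t * z l).
  rewrite gauss_expand big_ord_recl -gauss_form0 !gauss_form_scale /= Rinv_1 in E.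
  rewrite 2!big_ord_recl /= !Rmult_0_l !Rplus_0_l.
  apply: (Rplus_eq_reg_l (t * 1 * gauss_form (jcoef x) i 0 z)).
  rewrite Rplus_0_r -[RHS]E Rmult_1_l; congr Rplus.
  by apply: eq_bigr => k _; rewrite gauss_form_scale /= /bump leq0n add1n !add0n; ring.
case: s s1 sr => [//|s] _ sr.
have /Rmult_integral [E|//] := univariate_poly_eq0 Hc (s := s.+2) ltac:(by []).
by case: (Rinv_neq_0_compat _ (INR_fact_neq_0 s.+1) E).
Qed.

Lemma gauss_iff_cyclic n r (x : JIdx n r -> R) :
  (forall s, (s <= r)%N -> symlast (jcoef x) s) ->
  gauss x <-> (forall s, (1 <= s <= r)%N -> cyclic_sum_zero (jcoef x) s).
Proof.
move=> HS; have {}HS s : (1 <= s <= r)%N -> symlast (jcoef x) s by case/andP => _ /HS.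
rewrite gauss_iff_forms; split => H s Hs.
  apply/(cyclic_sum_zero_iff (HS s Hs)) => i.
  by apply/(gauss_form_eq0_iff i (HS s Hs)); exact: H.
move=> i; apply/(gauss_form_eq0_iff i (HS s Hs)); move: i.
by apply/(cyclic_sum_zero_iff (HS s Hs)); exact: H.
Qed.

(** * N_1 = 0 *)

(* A tensor T_{ijk} symmetric in (i,j) with T_{ijk} + T_{ikj} = 0 vanishes:
   it is then antisymmetric in (j,k), and symmetric/antisymmetric in
   alternate adjacent pairs forces T = -T. *)
Lemma order1_vanishing n (T : tensor n) : sym12 T 1 -> cyclic_sum_zero T 1 ->
  forall i j k, size k = 1%N -> T i j k = 0.
Proof.
move=> HS HC i j [//|c [|//]] _.
have cyc a b d : T a b [:: d] + T a d [:: b] = 0.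
  by have := HC a b [:: d] erefl; rewrite !big_ord_recr big_ord0 /= Rplus_0_l.
have sym a b d : T a b [:: d] = T b a [:: d] by apply: HS.
have := cyc i j c; have := cyc c i j; have := cyc j c i.
have := sym i c j; have := sym c j i; have := sym j i c.
lra.
Qed.

Lemma cyclic_sum_zero_vanishing n (T : tensor n) s :
  (forall i j k, size k = s -> T i j k = 0) -> cyclic_sum_zero T s.
Proof.
move=> H i j k Hk; rewrite big1 // => m _; apply: H.
by rewrite size_behead size_rot /= Hk.
Qed.

Section Agreement.
Variables (n : nat) (T T' : tensor n) (s : nat).
Hypothesis agree : forall i j k, size k = s -> T i j k = T' i j k.

Lemma sym12_agree : sym12 T s -> sym12 T' s.
Proof. by move=> H i j k Hk; rewrite -!agree //; exact: H. Qed.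

Lemma symlast_agree : symlast T s -> symlast T' s.
Proof.
move=> H i j k k' Hk P; rewrite -!agree // -?(perm_size P) //; exact: H.
Qed.

Lemma cyclic_sum_zero_agree : cyclic_sum_zero T s -> cyclic_sum_zero T' s.
Proof.
move=> H i j k Hk; apply: eq_trans (H i j k Hk); apply: eq_bigr => m _.
by rewrite -agree // size_behead size_rot /= Hk.
Qed.
End Agreement.

Lemma in_N0_ext n p q (G G' : 'I_n -> 'I_n -> R) :
  (forall i j, G i j = G' i j) -> in_N0 p q G -> in_N0 p q G'.
Proof.
move=> H; suff -> : G' = G by [].
by apply: functional_extensionality => i; apply: functional_extensionality => j.
Qed.

Definition normal_to_jet n r (y : TIdx n r -> R) : JIdx n r -> R :=
  fun t => if size (val t.2) == 1%N then 0 else tcoef y t.1.1 t.1.2 (val t.2).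

Lemma jcoef_val n r (x : JIdx n r -> R) i j (w : word n r) :
  jcoef x i j (val w) = x (i, j, w).
Proof. by rewrite /jcoef valK. Qed.

Lemma tcoef_val n r (y : TIdx n r -> R) i j (w : tword n r) :
  tcoef y i j (val w) = y (i, j, w).
Proof. by rewrite /tcoef valK. Qed.

Lemma tcoef_jet_to_normal n r (x : JIdx n r -> R) i j k :
  tcoef (jet_to_normal x) i j k = if size k != 1%N then jcoef x i j k else 0.
Proof.
rewrite /tcoef; case: insubP => [w /andP [_ H1] Ew | Hn].
  by rewrite H1 /jet_to_normal /= Ew.
case: ifP => // H1; rewrite /jcoef insubN //.
by apply: contra Hn => ->.
Qed.

Lemma jcoef_normal_to_jet n r (y : TIdx n r -> R) i j k :
  jcoef (normal_to_jet y) i j k = if size k == 1%N then 0 else tcoef y i j k.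
Proof.
rewrite /jcoef; case: insubP => [w _ Ew | Hn]; first by rewrite /normal_to_jet /= Ew.
by case: ifP => // H1; rewrite /tcoef insubN // negb_and Hn.
Qed.

Lemma normal_jets_cyclic n p q r (x : JIdx n r -> R) : normal_jets p q x ->
  forall s, (1 <= s <= r)%N -> cyclic_sum_zero (jcoef x) s.
Proof.
by move=> [[Hjs _] Hg]; apply/(gauss_iff_cyclic (fun s sr => (Hjs s sr).2)).
Qed.

Lemma normal_jets_order1 n p q r (x : JIdx n r -> R) : normal_jets p q x ->
  forall i j k, size k = 1%N -> jcoef x i j k = 0.
Proof.
move=> Hx i j k Hk; have [r0 | r1] := leqP r 0.
  by rewrite /jcoef insubN // Hk -ltnNge (leq_ltn_trans r0).
have [[Hjs _] _] := Hx.
apply: order1_vanishing Hk; first exact: (Hjs 1%N r1).1.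
by apply: (normal_jets_cyclic Hx); rewrite r1.
Qed.

Lemma jet_to_normal_maps n p q r (x : JIdx n r -> R) :
  normal_jets p q x -> normal_target p q (jet_to_normal x).
Proof.
move=> Hx; have [[Hjs HN0] _] := Hx; split.
  by apply: in_N0_ext HN0 => i j; rewrite tcoef_jet_to_normal.
move=> s /andP [s2 sr].
have agree i j k : size k = s -> jcoef x i j k = tcoef (jet_to_normal x) i j k.
  by move=> Hk; rewrite tcoef_jet_to_normal Hk; case: s s2 {sr} Hk => [|[|s]].
have [S1 S2] := Hjs s sr.
split; [exact: sym12_agree S1 | split; [exact: symlast_agree S2 |]].
apply: cyclic_sum_zero_agree agree _; apply: (normal_jets_cyclic Hx).
by rewrite sr (leq_trans _ s2).
Qed.

Lemma normal_to_jet_jet_space n p q r (y : TIdx n r -> R) :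
  normal_target p q y -> jet_space p q (normal_to_jet y).
Proof.
move=> [HN0 HNk]; split; last by apply: in_N0_ext HN0 => i j; rewrite jcoef_normal_to_jet.
move=> [|[|s]] sr.
- split => [i j k /size0nil -> | i j k k' /size0nil -> P].
    by rewrite !jcoef_normal_to_jet; exact: HN0.1.
  by rewrite (size0nil (esym (perm_size P))).
- split => [i j k Hk | i j k k' Hk P]; rewrite !jcoef_normal_to_jet ?Hk //.
  by rewrite -(perm_size P) Hk.
- have agree i j k : size k = s.+2 -> tcoef y i j k = jcoef (normal_to_jet y) i j k.
    by move=> Hk; rewrite jcoef_normal_to_jet Hk.
  have [S1 [S2 _]] := HNk s.+2 sr.
  by split; [exact: sym12_agree S1 | exact: symlast_agree S2].
Qed.

Lemma normal_to_jet_maps n p q r (y : TIdx n r -> R) :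
  normal_target p q y -> normal_jets p q (normal_to_jet y).
Proof.
move=> Hy; have JS := normal_to_jet_jet_space Hy; split => //.
apply/(gauss_iff_cyclic (fun s sr => (JS.1 s sr).2)) => -[//|[|s]] /andP [_ sr].
  by apply: cyclic_sum_zero_vanishing => i j k Hk; rewrite jcoef_normal_to_jet Hk.
have [_ [_ C]] := Hy.2 s.+2 sr.
by apply: cyclic_sum_zero_agree C => i j k Hk; rewrite jcoef_normal_to_jet Hk.
Qed.

Lemma normal_to_jetK n p q r (x : JIdx n r -> R) :
  normal_jets p q x -> normal_to_jet (jet_to_normal x) = x.
Proof.
move=> Hx; apply: functional_extensionality => -[[i j] w].
rewrite /normal_to_jet /= tcoef_jet_to_normal.
case: eqP => [H1 | _]; last by rewrite jcoef_val.
by rewrite -jcoef_val (normal_jets_order1 Hx).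
Qed.

Lemma jet_to_normalK n r (y : TIdx n r -> R) : jet_to_normal (normal_to_jet y) = y.
Proof.
apply: functional_extensionality => -[[i j] w].
have /andP [_ H1] := valP w.
by rewrite /jet_to_normal /= jcoef_normal_to_jet (negbTE H1) tcoef_val.
Qed.

Lemma jet_to_normal_smooth n r (A : (JIdx n r -> R) -> Prop) :
  smooth_on A (@jet_to_normal n r).
Proof.
apply: smooth_on_coordinate_map => -[[i j] w].
rewrite /jet_to_normal /jcoef /=; case: insub => [w'|]; last by right; exists 0.
by left; exists (i, j, w').
Qed.

Lemma normal_to_jet_smooth n r (B : (TIdx n r -> R) -> Prop) :
  smooth_on B (@normal_to_jet n r).
Proof.
apply: smooth_on_coordinate_map => -[[i j] w].
rewrite /normal_to_jet /tcoef /=; case: (size (val w) == 1%N); first by right; exists 0.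
case: insub => [w'|]; last by right; exists 0.
by left; exists (i, j, w').
Qed.

(* The statement is elaborated without implicit arguments. *)
Unset Implicit Arguments.

Theorem mainTheorem4 (n p q r : nat) (hn : n = (p + q)%N) :
  diffeomorphism (@normal_jets n p q r) (@normal_target n p q r) (@jet_to_normal n r).
Proof.
split; first by move=> x; exact: jet_to_normal_maps.
split; first exact: jet_to_normal_smooth.
exists (@normal_to_jet n r).
split; first by move=> y; exact: normal_to_jet_maps.
split; first exact: normal_to_jet_smooth.
split; first by move=> x; exact: normal_to_jetK.
by move=> y _; exact: jet_to_normalK.
Qed.
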